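(* Let $\alpha>0$ and $\beta,\gamma>1/2$, all different from $1$, satisfy $\frac{\alpha}{\alpha-1}=\frac{\beta}{\beta-1}+\frac{\gamma}{\gamma-1}$, and assume $\beta>\gamma$. Write $\eta'=\frac{\eta-1}{\eta}$. Then: (i) If $0<\frac{\alpha'}{\beta'}<1$, then either (Case 1) $\alpha,\beta,\gamma>1$, $\alpha<\gamma<\beta$, $\alpha\in(1,2)$ and $\beta,\gamma\in(1,\infty)$; or (Case 2) $\alpha,\beta,\gamma<1$, $\gamma<\beta<\alpha$, $\alpha\in[2/3,1)$ and $\beta,\gamma\in[1/2,1)$. (ii) If $0<\frac{\beta'}{\alpha'}<1$, then (Case 3) $\alpha,\beta>1$, $\gamma<1$, $\gamma<\beta<\alpha$, $\gamma\in[1/2,1)$, $\beta\in(1,2)$ and $\alpha\in(1,\infty)$. (iii) If $0<\frac{\gamma'}{\alpha'}<1$, then (Case 4) $\alpha,\gamma<1$, $\beta>1$, $\alpha<\gamma<\beta$, $\alpha\in(0,1)$, $\gamma\in[1/2,1)$ and $\beta\in(1,\infty)$. Moreover, Cases 1–4 cover all possible cases (i.e. every such triple $(\alpha,\beta,\gamma)$ falls into one of Cases 1–4). *)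

From HB Require Import structures.
From mathcomp Require Import all_boot all_order all_algebra.
Set Implicit Arguments. Unset Strict Implicit. Unset Printing Implicit Defensive.
Import Order.TTheory GRing.Theory Num.Theory.
Local Open Scope ring_scope.

Definition hprime (R : realFieldType) (eta : R) : R := (eta - 1) / eta.

Definition Case1 (R : realFieldType) (a b c : R) : Prop :=
  (1 < a /\ 1 < b /\ 1 < c) /\ (a < c /\ c < b) /\
  (1 < a /\ a < 2) /\ (1 < b /\ 1 < c).

Definition Case2 (R : realFieldType) (a b c : R) : Prop :=
  (a < 1 /\ b < 1 /\ c < 1) /\ (c < b /\ b < a) /\
  (2 / 3 <= a /\ a < 1) /\ (1 / 2 <= b /\ b < 1) /\ (1 / 2 <= c /\ c < 1).

Definition Case3 (R : realFieldType) (a b c : R) : Prop :=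
  (1 < a /\ 1 < b /\ c < 1) /\ (c < b /\ b < a) /\
  (1 / 2 <= c /\ c < 1) /\ (1 < b /\ b < 2) /\ 1 < a.

Definition Case4 (R : realFieldType) (a b c : R) : Prop :=
  (a < 1 /\ c < 1 /\ 1 < b) /\ (a < c /\ c < b) /\
  (0 < a /\ a < 1) /\ (1 / 2 <= c /\ c < 1) /\ 1 < b.

(* Clearing denominators, the relation a/(a-1) = b/(b-1) + c/(c-1) becomes
   (a - 1)(bc - 1) = (b - 1)(c - 1), whence also
   (a - b)(bc - 1) = -c(b - 1)^2 and (a - c)(bc - 1) = -b(c - 1)^2.
   The position of a relative to 1, b and c is thus read off from the signs of
   b - 1, c - 1 and bc - 1, which yields the four cases.  As eta |-> eta' is
   increasing on (0, oo) and vanishes at 1, 0 < u'/v' < 1 says exactly that u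
   lies strictly between 1 and v, and this singles out the cases in (i)-(iii). *)

From HB Require Import structures.
From mathcomp Require Import all_boot all_order all_algebra.
From mathcomp Require Import ring lra.
Import Order.TTheory GRing.Theory Num.Theory.
Local Open Scope ring_scope.

Lemma divr_in01 (R : realFieldType) (u v : R) :
  (0 < u / v < 1) = (0 < u < v) || (v < u < 0).
Proof.
case: (ltgtP v 0) => [v_lt0 | v_gt0 | ->].
- have -> : (0 < u < v) = false by apply/andP => -[]; lra.
  by rewrite ltr_ndivlMr // ltr_ndivrMr // mul0r mul1r andbC.
- have -> : (v < u < 0) = false by apply/andP => -[]; lra.
  by rewrite ltr_pdivlMr // ltr_pdivrMr // mul0r mul1r orbF.
- by rewrite invr0 mulr0 ltxx lt_asym.
Qed.

Lemma hprimeE (R : realFieldType) (u : R) : u != 0 -> hprime u = 1 - u^-1.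
Proof. by move=> u_neq0; rewrite /hprime mulrBl divff // div1r. Qed.

Lemma hprime1 (R : realFieldType) : hprime (1 : R) = 0.
Proof. by rewrite /hprime subrr mul0r. Qed.

Lemma hprime_lt (R : realFieldType) (u v : R) :
  0 < u -> 0 < v -> (hprime u < hprime v) = (u < v).
Proof.
move=> u_gt0 v_gt0.
by rewrite !hprimeE ?gt_eqF // ltrD2l ltrN2 ltf_pV2 ?posrE.
Qed.

Lemma hprime_ratio_in01 (R : realFieldType) (u v : R) :
  0 < u -> 0 < v ->
  (0 < hprime u / hprime v < 1) = (1 < u < v) || (v < u < 1).
Proof.
by move=> u_gt0 v_gt0; rewrite divr_in01 -(hprime1 R) !hprime_lt.
Qed.

Lemma conj_exp_sum_factor {F : fieldType} {a b c : F} :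
  a != 1 -> b != 1 -> c != 1 ->
  a / (a - 1) = b / (b - 1) + c / (c - 1) ->
  (a - 1) * (b * c - 1) = (b - 1) * (c - 1).
Proof.
move=> a_neq1 b_neq1 c_neq1 rel.
have -> : (a - 1) * (b * c - 1) = (b - 1) * (c - 1)
    + (a - 1) * (b - 1) * (c - 1) * (b / (b - 1) + c / (c - 1) - a / (a - 1)).
  by field; rewrite !subr_eq0 a_neq1 b_neq1 c_neq1.
by rewrite rel subrr mulr0 addr0.
Qed.

Lemma conj_exp_subr {R : comPzRingType} {a b c : R} (t : R) :
  (a - 1) * (b * c - 1) = (b - 1) * (c - 1) ->
  (a - t) * (b * c - 1) = (b - 1) * (c - 1) + (1 - t) * (b * c - 1).
Proof. by move=> <-; ring. Qed.

Lemma conj_exp_subb {R : comPzRingType} {a b c : R} :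
  (a - 1) * (b * c - 1) = (b - 1) * (c - 1) ->
  (a - b) * (b * c - 1) = - (c * (b - 1) ^+ 2).
Proof. by move/conj_exp_subr->; ring. Qed.

Lemma conj_exp_subc {R : comPzRingType} {a b c : R} :
  (a - 1) * (b * c - 1) = (b - 1) * (c - 1) ->
  (a - c) * (b * c - 1) = - (b * (c - 1) ^+ 2).
Proof. by move/conj_exp_subr->; ring. Qed.

Lemma mul_sqr_sub1_gt0 (R : realDomainType) (x y : R) :
  0 < x -> y != 1 -> 0 < x * (y - 1) ^+ 2.
Proof. by move=> x_gt0 y_neq1; rewrite mulr_gt0 // exprn_even_gt0 //= subr_eq0. Qed.

Lemma conj_exp_Case1 {R : realFieldType} {a b c : R} :
  (a - 1) * (b * c - 1) = (b - 1) * (c - 1) -> c < b -> 1 < c -> Case1 a b c.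
Proof.
move=> factor c_lt_b c_gt1.
have b_gt1 : 1 < b by lra.
have bc1_gt0 : 0 < b * c - 1 by rewrite subr_gt0; nra.
have a_gt1 : 1 < a.
  by rewrite -subr_gt0 -(pmulr_lgt0 _ bc1_gt0) factor mulr_gt0 // subr_gt0.
have a_lt_c : a < c.
  rewrite -subr_lt0 -(pmulr_llt0 _ bc1_gt0) (conj_exp_subc factor) oppr_lt0.
  by rewrite mul_sqr_sub1_gt0 ?gt_eqF //; lra.
have a_lt2 : a < 2.
  rewrite -subr_lt0 -(pmulr_llt0 _ bc1_gt0) (conj_exp_subr 2 factor).
  lra.
rewrite /Case1; lra.
Qed.

Lemma conj_exp_Case2 {R : realFieldType} {a b c : R} :
  (a - 1) * (b * c - 1) = (b - 1) * (c - 1) ->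
  1 / 2 < c -> c < b -> b < 1 -> Case2 a b c.
Proof.
move=> factor c_gt_half c_lt_b b_lt1.
have bc1_lt0 : b * c - 1 < 0 by rewrite subr_lt0; nra.
have a_lt1 : a < 1.
  by rewrite -subr_lt0 -(nmulr_lgt0 _ bc1_lt0) factor; nra.
have b_lt_a : b < a.
  rewrite -subr_gt0 -(nmulr_llt0 _ bc1_lt0) (conj_exp_subb factor) oppr_lt0.
  by rewrite mul_sqr_sub1_gt0 ?lt_eqF //; lra.
have a_ge2_3 : 2 / 3 <= a.
  (* (a - 2/3) (bc - 1) = ((2b - 1)(c - 1) + (b - 1)(2c - 1)) / 3 *)
  by rewrite -subr_ge0 -(nmulr_lle0 _ bc1_lt0) (conj_exp_subr _ factor); nra.
rewrite /Case2; lra.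
Qed.

Lemma conj_exp_Case3 {R : realFieldType} {a b c : R} :
  (a - 1) * (b * c - 1) = (b - 1) * (c - 1) ->
  1 / 2 < c -> c < 1 -> 1 < b -> b * c < 1 -> Case3 a b c.
Proof.
move=> factor c_gt_half c_lt1 b_gt1 bc_lt1.
have bc1_lt0 : b * c - 1 < 0 by rewrite subr_lt0.
have a_gt1 : 1 < a.
  by rewrite -subr_gt0 -(nmulr_llt0 _ bc1_lt0) factor; nra.
have b_lt_a : b < a.
  rewrite -subr_gt0 -(nmulr_llt0 _ bc1_lt0) (conj_exp_subb factor) oppr_lt0.
  by rewrite mul_sqr_sub1_gt0 ?gt_eqF //; lra.
have b_lt2 : b < 2 by nra.
rewrite /Case3; lra.
Qed.

Lemma conj_exp_Case4 {R : realFieldType} {a b c : R} :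
  (a - 1) * (b * c - 1) = (b - 1) * (c - 1) ->
  0 < a -> 1 / 2 < c -> c < 1 -> 1 < b -> 1 < b * c -> Case4 a b c.
Proof.
move=> factor a_gt0 c_gt_half c_lt1 b_gt1 bc_gt1.
have bc1_gt0 : 0 < b * c - 1 by rewrite subr_gt0.
have a_lt1 : a < 1.
  by rewrite -subr_lt0 -(pmulr_llt0 _ bc1_gt0) factor; nra.
have a_lt_c : a < c.
  rewrite -subr_lt0 -(pmulr_llt0 _ bc1_gt0) (conj_exp_subc factor) oppr_lt0.
  by rewrite mul_sqr_sub1_gt0 ?lt_eqF //; lra.
rewrite /Case4; lra.
Qed.

Lemma conj_exp_cases {R : realFieldType} {a b c : R} :
  (a - 1) * (b * c - 1) = (b - 1) * (c - 1) ->
  0 < a -> 1 / 2 < c -> c < b -> b != 1 -> c != 1 ->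
  Case1 a b c \/ Case2 a b c \/ Case3 a b c \/ Case4 a b c.
Proof.
move=> factor a_gt0 c_gt_half c_lt_b b_neq1 c_neq1.
case: (ltgtP c 1) c_neq1 => [c_lt1 _ | c_gt1 _ | -> /eqP //]; last first.
  by left; apply: conj_exp_Case1.
case: (ltgtP b 1) b_neq1 => [b_lt1 _ | b_gt1 _ | -> /eqP //].
  by right; left; apply: conj_exp_Case2.
case: (ltgtP (b * c) 1) => [bc_lt1 | bc_gt1 | bc_eq1].
- by right; right; left; apply: conj_exp_Case3.
- by right; right; right; apply: conj_exp_Case4.
- by move: factor; rewrite bc_eq1 subrr mulr0; nra.
Qed.

Theorem lemma7 (R : realFieldType) (a b c : R)
  (ha : 0 < a) (hb : 1 / 2 < b) (hc : 1 / 2 < c)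
  (ha1 : a != 1) (hb1 : b != 1) (hc1 : c != 1)
  (hrel : a / (a - 1) = b / (b - 1) + c / (c - 1))
  (hbc : c < b) :
  [/\ (0 < hprime a / hprime b < 1 -> Case1 a b c \/ Case2 a b c),
      (0 < hprime b / hprime a < 1 -> Case3 a b c),
      (0 < hprime c / hprime a < 1 -> Case4 a b c) &
      (Case1 a b c \/ Case2 a b c \/ Case3 a b c \/ Case4 a b c)].
Proof.
have b_gt0 : 0 < b by lra.
have c_gt0 : 0 < c by lra.
have cases := conj_exp_cases (conj_exp_sum_factor ha1 hb1 hc1 hrel) ha hc hbc hb1 hc1.
rewrite !hprime_ratio_in01 //.
split=> // /orP[] /andP[? ?]; move: cases; rewrite /Case1 /Case2 /Case3 /Case4; lra.
Qed.
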